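(* Let $b\ge2$ be an integer and let $(q,q_1;q',q_1')$ be one of the fifteen quadruples $(3,1;3,1)$, $(3,1;3,2)$, $(3,2;3,2)$, $(3,2;4,3)$, $(3,1;4,3)$, $(3,2;4,1)$, $(3,1;4,1)$, $(3,2;5,4)$, $(3,2;5,3)$, $(3,1;5,4)$, $(3,2;5,2)$, $(3,1;5,3)$, $(3,2;5,1)$, $(3,1;5,2)$, $(3,1;5,1)$. Consider the configuration $\langle b;q,q_1;q',q_1'\rangle$ of smooth rational curves: a central curve $E_0$ with $E_0^2=-b$; a curve $E_1$ with $E_1^2=-2$; a chain $E_2,\dots,E_k$ with $E_i^2=-n_i$ where $[n_2,\dots,n_k]=q/q_1$; and a chain $E_{k+1},\dots,E_l$ with $E_i^2=-n_i$ where $[n_{k+1},\dots,n_l]=q'/q_1'$; $E_0$ meets each of $E_1,E_2,E_{k+1}$ transversally once, consecutive curves in each chain meet once, and there are no other intersections. Let $a_0,\dots,a_l$ be the discrepancies, i.e. the unique solution of $\sum_ja_jE_j\cdot E_i=2+E_i^2$ for all $i$. If not all $a_i$ are $0$ (i.e. the corresponding log terminal singularity of type $T_m$, $O_m$, or $I_m$ is not canonical), then $a_0+a_1\ge1$.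
   Context: $[m_1,\dots,m_r]$ denotes the Hirzebruch–Jung continued fraction $m_1-1/(m_2-1/(\cdots-1/m_r))$ with $m_i\ge2$; explicitly $3/1=[3]$, $3/2=[2,2]$, $4/3=[2,2,2]$, $4/1=[4]$, $5/4=[2,2,2,2]$, $5/3=[2,3]$, $5/2=[3,2]$, $5/1=[5]$. These configurations are exactly the minimal resolution graphs of log terminal singularities of types $T_m$ (first three quadruples), $O_m$ (next four) and $I_m$ (last eight). *)

From HB Require Import structures.
From mathcomp Require Import all_boot all_order all_algebra.
Set Implicit Arguments. Unset Strict Implicit. Unset Printing Implicit Defensive.
Import Order.TTheory GRing.Theory Num.Theory.
Local Open Scope ring_scope.

(* Hirzebruch-Jung continued fraction [m_1,...,m_r] = m_1 - 1/(m_2 - 1/(... - 1/m_r)).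
   (hjcf [::] = 0 is a dummy value; since 0^-1 = 0 in mathcomp, hjcf [:: m] = m.) *)
Fixpoint hjcf (s : seq nat) : rat :=
  match s with
  | [::] => 0
  | m :: s' => m%:R - (hjcf s')^-1
  end.

Definition quads : seq (nat * nat * nat * nat) :=
  [:: (3,1,3,1); (3,1,3,2); (3,2,3,2); (3,2,4,3); (3,1,4,3); (3,2,4,1);
      (3,1,4,1); (3,2,5,4); (3,2,5,3); (3,1,5,4); (3,2,5,2); (3,1,5,3);
      (3,2,5,1); (3,1,5,2); (3,1,5,1)]%N.

(* Configuration <b; ns; ns'> with curves E_0,...,E_l indexed by 0..l,
   k = 1 + size ns, l = k + size ns'.
   self-intersection numbers: E_0^2 = -b, E_1^2 = -2, E_i^2 = -n_i on the chains. *)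
Definition cfg_k (ns : seq nat) : nat := (1 + size ns)%N.
Definition cfg_l (ns ns' : seq nat) : nat := (cfg_k ns + size ns')%N.

Definition cfg_weights (b : nat) (ns ns' : seq nat) : seq nat :=
  [:: b; 2%N] ++ ns ++ ns'.

Definition cfg_adj_lt (ns ns' : seq nat) (i j : nat) : bool :=
  let k := cfg_k ns in let l := cfg_l ns ns' in
  [|| (i == 0%N) && (j == 1%N),
      (i == 0%N) && (j == 2%N),
      (i == 0%N) && (j == k.+1),
      [&& 2 <= i, j == i.+1 & j <= k]%N
    | [&& k.+1 <= i, j == i.+1 & j <= l]%N ].

Definition cfg_int (b : nat) (ns ns' : seq nat) (i j : nat) : rat :=
  if i == j then - (nth 0%N (cfg_weights b ns ns') i)%:R
  else if cfg_adj_lt ns ns' i j || cfg_adj_lt ns ns' j i then 1 else 0.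

Definition is_discrepancy (b : nat) (ns ns' : seq nat) (a : nat -> rat) : Prop :=
  forall i : nat, (i <= cfg_l ns ns')%N ->
    \sum_(j < (cfg_l ns ns').+1) a j * cfg_int b ns ns' j i
      = 2 + cfg_int b ns ns' i i.

(* On a chain of curves with self-intersections [-n_1, ..., -n_r], [n_1, ..., n_r] = q/q1,
   attached to a curve of discrepancy x, the first curve has discrepancy y with
   1 - y = (1 - x) q1/q + 1/q; the (-2)-curve E_1 has a_1 = a_0/2.  Substituting into the
   equation at E_0 gives a_0 (b - 1/2 - q1/q - q1'/q') = b - (q1+1)/q - (q1'+1)/q', so
   a_0 + a_1 = 3 a_0 / 2 >= 1 becomes an explicit inequality between b and the quadruple.
   It holds for b >= 3, and for b = 2 except for (3,2;3,2), (3,2;4,3), (3,2;5,4), where all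
   curves are (-2)-curves (types E_6, E_7, E_8) and every discrepancy vanishes.  The
   numerator q is recovered from q/q1 by uniqueness of Hirzebruch-Jung expansions. *)

From HB Require Import structures.
From mathcomp Require Import all_boot all_order all_algebra.
From mathcomp Require Import ring lra zify.
Import Order.TTheory GRing.Theory Num.Theory.
Set Implicit Arguments. Unset Strict Implicit.
Local Open Scope ring_scope.

Definition hj_chain (s : seq nat) : bool := all (fun n => 2 <= n)%N s.

Lemma hjcf_gt1 s : hj_chain s -> s != [::] -> 1 < hjcf s.
Proof.
elim: s => [//|m s IH] /= /andP [m_ge2 s_chain] _.
have m_ge2' : (2 : rat) <= m%:R by rewrite (ler_nat _ 2 m).
case: s IH s_chain => [|m' s'] IH s_chain; first by rewrite invr0 subr0; lra.
have := IH s_chain isT; set y := hjcf _ => y_gt1.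
have : y^-1 < 1 by rewrite invf_lt1 //; lra.
lra.
Qed.

Lemma hjcf_cons_bounds m s : (2 <= m)%N -> hj_chain s ->
  m%:R - 1 < hjcf (m :: s) <= m%:R.
Proof.
move=> m_ge2 s_chain /=; have [-> | s_nz] := eqVneq s [::].
  by rewrite invr0 subr0; lra.
have := hjcf_gt1 s_chain s_nz; set y := hjcf s => y_gt1.
have : 0 < y^-1 < 1 by rewrite invr_gt0 invf_lt1; lra.
lra.
Qed.

Lemma hjcf_inj s t : hj_chain s -> hj_chain t -> hjcf s = hjcf t -> s = t.
Proof.
have cons_gt1 m u : hj_chain (m :: u) -> 1 < hjcf (m :: u) by move/hjcf_gt1; apply.
elim: s t => [|m s IH] [|n t] // s2 t2.
- by have := cons_gt1 _ _ t2; rewrite /= => + eq0; rewrite -eq0 ltr10.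
- by have := cons_gt1 _ _ s2 => + eq0; rewrite eq0 ltr10.
move: s2 t2 => /= /andP [m2 s2] /andP [n2 t2] eq_cf.
have m_eq_n : m = n.
  have := hjcf_cons_bounds m2 s2; have := hjcf_cons_bounds n2 t2.
  rewrite /= eq_cf => /andP [ltn lenn] /andP [ltm lemm].
  apply/eqP; rewrite eqn_leq -[(m <= n)%N]ltnS -[(n <= m)%N]ltnS.
  by rewrite -!(ltr_nat rat) -!natr1; apply/andP; split; lra.
move: eq_cf; rewrite m_eq_n => /addrI /oppr_inj /invr_inj eq_tail.
by rewrite (IH t s2 t2 eq_tail).
Qed.

(* The numerator q of hjcf s = q/q1, i.e. the continuant of s. *)
Fixpoint hjnum (s : seq nat) : rat :=
  if s is _ :: t then hjcf s * hjnum t else 1.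

Lemma hjnum_gt0 s : hj_chain s -> 0 < hjnum s.
Proof.
elim: s => [|m t IH] //= /andP [m2 t2].
rewrite mulr_gt0 ?IH //; apply: lt_trans (hjcf_gt1 (_ : hj_chain (m :: t)) _) => //=.
by rewrite m2.
Qed.

(* x 0 is the discrepancy of the curve the chain is attached to, x d.+1 that of its d-th curve. *)
Definition chain_eqs (s : seq nat) (x : nat -> rat) : Prop :=
  forall d, (d < size s)%N ->
    x d - (nth 0%N s d)%:R * x d.+1 + (if (d.+1 < size s)%N then x d.+2 else 0)
      = 2 - (nth 0%N s d)%:R.

Lemma chain_eqs_behead m t x : chain_eqs (m :: t) x -> chain_eqs t (x \o succn).
Proof. by move=> eqs d d_lt; apply: (eqs d.+1). Qed.

Lemma chain_eqs_head s x : hj_chain s -> s != [::] -> chain_eqs s x ->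
  1 - x 1%N = (1 - x 0%N) / hjcf s + (hjnum s)^-1.
Proof.
elim: s x => [//|m t IH] x s2 _ eqs.
have h_gt1 := hjcf_gt1 s2 isT.
have := eqs 0%N isT; move: s2 h_gt1 => /= /andP [m2 t2].
case: (eqVneq t [::]) => [-> | t_nz] /=.
  rewrite invr0 subr0 mulr1 addr0 => m_gt1 eq0.
  have -> : x 0%N = 2 - m%:R + m%:R * x 1%N by lra.
  by field; lra.
have := IH _ t2 t_nz (chain_eqs_behead eqs) => /=.
have := hjcf_gt1 t2 t_nz; have := hjnum_gt0 t2.
rewrite ltnS lt0n size_eq0 t_nz.
move: (hjcf t) (hjnum t) => ht Nt Nt_gt0 ht_gt1 x2E h_gt1 eq0.
have -> : x 0%N = 2 - m%:R + m%:R * x 1%N - x 2%N by lra.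
have -> : x 2%N = 1 - (1 - x 1%N) / ht - Nt^-1 by lra.
have mht_gt0 : 0 < m%:R * ht - 1.
  have -> : m%:R * ht - 1 = (m%:R - ht^-1) * ht by field; lra.
  by rewrite mulr_gt0 //; lra.
by field; rewrite !gt_eqF //; lra.
Qed.

Lemma chain_eqs_linear r x : chain_eqs (nseq r 2%N) x -> x 0%N = 0 ->
  forall d, (d <= r)%N -> x d = d%:R * x 1%N.
Proof.
move=> eqs x0.
have step d : (d.+1 < r)%N -> x d.+2 = 2 * x d.+1 - x d.
  move=> dr; have := eqs d; rewrite size_nseq nth_nseq (ltnW dr) dr => /(_ isT); lra.
move=> d; elim: d {-2}d (leqnn d) => [|n IH] [|[|d]] //; rewrite ?mul0r ?mul1r //.
move=> dn dr; rewrite step 1?(IH d) 1?(IH d.+1) //; [|lia..].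
by rewrite -[d.+2]addn2 -[d.+1]addn1 !natrD; lra.
Qed.

Lemma chain_eqs_nseq2_zero r x : chain_eqs (nseq r 2%N) x -> x 0%N = 0 ->
  forall d, (d <= r)%N -> x d = 0.
Proof.
move=> eqs x0; have lin := chain_eqs_linear eqs x0.
case: r eqs lin => [|r] eqs lin; first by case.
suff x1 : x 1%N = 0 by move=> d /lin ->; rewrite x1 mulr0.
have := eqs r; rewrite size_nseq nth_nseq ltnn !ltnSn (lin r) // (lin r.+1) //.
rewrite -[r.+1]addn1 natrD => /(_ isT) eqr.
have /eqP : r.+2%:R * x 1%N = 0 by rewrite -addn2 natrD; lra.
by rewrite mulf_eq0 pnatr_eq0 => /eqP.
Qed.

Lemma big_ord_support (V : nmodType) (L : nat) (F : nat -> V) (S : seq nat) :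
  uniq S -> all (fun j => j < L)%N S ->
  (forall j, (j < L)%N -> j \notin S -> F j = 0) ->
  \sum_(j < L) F j = \sum_(j <- S) F j.
Proof.
move=> S_uniq /allP S_lt F0.
rewrite -(big_mkord xpredT) (bigID (mem S)) /=.
rewrite [X in _ + X]big1_seq ?addr0 => [|j /andP [jS]]; last first.
  by rewrite mem_index_iota => /F0; apply.
rewrite -big_filter; apply/perm_big/uniq_perm => //.
  by rewrite filter_uniq ?iota_uniq.
by move=> j; rewrite mem_filter mem_index_iota andb_idr // => /S_lt.
Qed.

Section Discrepancies.

Variables (b : nat) (ns ns' : seq nat) (a : nat -> rat).
Hypotheses (ns_gt0 : (0 < size ns)%N) (ns'_gt0 : (0 < size ns')%N).
Hypothesis a_disc : is_discrepancy b ns ns' a.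

Local Notation k := (cfg_k ns).
Local Notation l := (cfg_l ns ns').
Local Notation adj j i := (cfg_adj_lt ns ns' j i || cfg_adj_lt ns ns' i j).

Lemma cfg_int_diag i : cfg_int b ns ns' i i = - (nth 0%N (cfg_weights b ns ns') i)%:R.
Proof. by rewrite /cfg_int eqxx. Qed.

Lemma cfg_int_adj j i : j != i -> adj j i -> cfg_int b ns ns' j i = 1.
Proof. by rewrite /cfg_int => /negbTE -> ->. Qed.

Local Notation discrepancy_eq i S :=
  (\sum_(j <- S) a j * cfg_int b ns ns' j i = 2 + cfg_int b ns ns' i i).

Lemma discrepancy_eq_on i S : (i <= l)%N -> uniq S -> all (fun j => j <= l)%N S ->
  (forall j, (j <= l)%N -> j \notin S -> (j != i) && ~~ adj j i) ->
  discrepancy_eq i S.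
Proof.
move=> il S_uniq S_le nadj; rewrite -(a_disc il); symmetry.
apply: big_ord_support => // j jl /(nadj _ jl) /andP [/negbTE ji /negbTE nadj_ji].
by rewrite /cfg_int ji nadj_ji mulr0.
Qed.

Ltac cfg_lia := rewrite /cfg_adj_lt /cfg_l /cfg_k; lia.
Ltac support_lia := rewrite /= ?inE; try (move=> ? ?; rewrite !inE); cfg_lia.
Ltac local_equation i S :=
  have : discrepancy_eq i S; [by apply: discrepancy_eq_on; support_lia |];
  rewrite !big_cons big_nil cfg_int_diag ?cfg_int_adj //=; try cfg_lia.

Lemma discrepancy_branch : a 0%N = 2 * a 1%N.
Proof. local_equation 1%N [:: 0; 1]%N; lra. Qed.

Lemma discrepancy_center :
  a 1%N + a 2%N + a k.+1 - b%:R * a 0%N = 2 - b%:R.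
Proof. local_equation 0%N [:: 0; 1; 2; k.+1]%N; lra. Qed.

Definition chain_values (o : nat) (d : nat) : rat :=
  if d is d'.+1 then a (o + d') else a 0%N.

Lemma nth_cfg_weights_chain o s d :
  (o = 2%N /\ s = ns) \/ (o = k.+1 /\ s = ns') -> (d < size s)%N ->
  nth 0%N (cfg_weights b ns ns') (o + d) = nth 0%N s d.
Proof.
case=> [[-> ->] | [-> ->]] ds; rewrite /cfg_weights /cfg_k /=.
  by rewrite nth_cat ds.
by rewrite nth_cat ltnNge leq_addr /= addKn.
Qed.

Lemma discrepancy_chain o s :
  (o = 2%N /\ s = ns) \/ (o = k.+1 /\ s = ns') -> chain_eqs s (chain_values o).
Proof.
move=> chain d ds; have w := nth_cfg_weights_chain chain ds.
have sizes : (o = 2%N /\ size s = size ns) \/ (o = (1 + size ns).+1 /\ size s = size ns').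
  by case: chain => [[-> ->] | [-> ->]]; [left | right].
case: d ds w => [|d] ds w /=; case: ifP => next.
- local_equation (o + 0)%N [:: o + 0; 0; o + 1]%N; rewrite w addn0; lra.
- local_equation (o + 0)%N [:: o + 0; 0]%N; rewrite w addn0; lra.
- local_equation (o + d.+1)%N [:: o + d.+1; o + d; o + d.+2]%N; rewrite w; lra.
- local_equation (o + d.+1)%N [:: o + d.+1; o + d]%N; rewrite w; lra.
Qed.

Lemma discrepancy_eq0 : all (pred1 2%N) ns -> all (pred1 2%N) ns' -> a 0%N = 0 ->
  forall i, (i <= l)%N -> a i = 0.
Proof.
move=> /all_pred1P ns2 /all_pred1P ns'2 a0.
have chain_zero o s : (o = 2%N /\ s = ns) \/ (o = k.+1 /\ s = ns') ->
    forall d, (d < size s)%N -> a (o + d) = 0.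
  move=> chain d ds; have := discrepancy_chain chain.
  have -> : s = nseq (size s) 2 by case: chain => [[_ ->] | [_ ->]].
  by move/chain_eqs_nseq2_zero => /(_ a0 d.+1); apply.
case=> [|[|i]] il //; first by have := discrepancy_branch; lra.
have [ins | ins] := ltnP i (size ns).
  exact: (chain_zero 2%N ns (or_introl (conj erefl erefl))).
have -> : i.+2 = (k.+1 + (i - size ns))%N by rewrite /cfg_k; lia.
by apply: (chain_zero _ ns'); [right | move: il; cfg_lia].
Qed.

Hypotheses (ns_chain : hj_chain ns) (ns'_chain : hj_chain ns').

Lemma discrepancy_center_value :
  a 0%N * (b%:R - 2^-1 - (hjcf ns)^-1 - (hjcf ns')^-1) =
  b%:R - (hjcf ns)^-1 - (hjnum ns)^-1 - (hjcf ns')^-1 - (hjnum ns')^-1.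
Proof.
have := discrepancy_center; have := discrepancy_branch.
have := chain_eqs_head ns_chain _ (discrepancy_chain (or_introl (conj erefl erefl))).
have := chain_eqs_head ns'_chain _ (discrepancy_chain (or_intror (conj erefl erefl))).
rewrite /chain_values -!size_eq0 -!lt0n !addn0 ns_gt0 ns'_gt0 => /(_ isT) + /(_ isT).
lra.
Qed.

End Discrepancies.

(* Fuel q suffices since the numerators decrease. *)
Fixpoint hj_expand_rec (fuel q q1 : nat) : seq nat :=
  if fuel is f.+1 then
    if q1 is 0 then [::] else
    let m := ((q + q1.-1) %/ q1)%N in m :: hj_expand_rec f q1 (m * q1 - q)
  else [::].

Definition hj_expand (q q1 : nat) : seq nat := hj_expand_rec q q q1.

Definition hj_fracs : seq (nat * nat) :=
  [:: (3, 1); (3, 2); (4, 3); (4, 1); (5, 4); (5, 3); (5, 2); (5, 1)]%N.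

Lemma hj_expand_fracs : all (fun f => let s := hj_expand f.1 f.2 in
  [&& hj_chain s, hjcf s == f.1%:R / f.2%:R, hjnum s == f.1%:R
    & (f.1 == f.2.+1) ==> all (pred1 2%N) s]) hj_fracs.
Proof. by vm_compute. Qed.

Lemma quads_fracs q q1 q' q1' : (q, q1, q', q1') \in quads ->
  ((q, q1) \in hj_fracs) && ((q', q1') \in hj_fracs).
Proof.
have /allP fracs : all (fun x => let: (q, q1, q', q1') := x in
  ((q, q1) \in hj_fracs) && ((q', q1') \in hj_fracs)) quads by [].
exact: fracs.
Qed.

Definition center_coef (b : rat) (q q1 q' q1' : nat) : rat :=
  b - 2^-1 - (q%:R / q1%:R)^-1 - (q'%:R / q1'%:R)^-1.

Definition center_rhs (b : rat) (q q1 q' q1' : nat) : rat :=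
  b - (q%:R / q1%:R)^-1 - q%:R^-1 - (q'%:R / q1'%:R)^-1 - q'%:R^-1.

Lemma quads_center_bound b q q1 q' q1' : (2 <= b)%N -> (q, q1, q', q1') \in quads ->
  0 < center_coef b%:R q q1 q' q1' /\
  (2 * center_coef b%:R q q1 q' q1' <= 3 * center_rhs b%:R q q1 q' q1' \/
   [/\ center_rhs b%:R q q1 q' q1' = 0, q = q1.+1 & q' = q1'.+1]).
Proof.
move=> b2 Hq.
have /allP /(_ _ Hq) /and4P [D2 D3 RD3 RD2] : all (fun x => let: (q, q1, q', q1') := x in
  [&& 0 < center_coef 2 q q1 q' q1', 0 < center_coef 3 q q1 q' q1',
      2 * center_coef 3 q q1 q' q1' <= 3 * center_rhs 3 q q1 q' q1'
    & (2 * center_coef 2 q q1 q' q1' <= 3 * center_rhs 2 q q1 q' q1') ||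
      [&& center_rhs 2 q q1 q' q1' == 0, q == q1.+1 & q' == q1'.+1]]) quads.
  by vm_compute.
(* Both quantities are b plus a constant, so the cases b = 2 and b = 3 suffice. *)
have [-> | b3] : b = 2%N \/ (3 <= b)%N by lia.
  split=> //; case/orP: RD2 => [|/and3P [/eqP R0 /eqP q_eq /eqP q'_eq]]; first by left.
  by right; split.
have coefE : center_coef b%:R q q1 q' q1' = center_coef 3 q q1 q' q1' + (b%:R - 3).
  by rewrite /center_coef; ring.
have rhsE : center_rhs b%:R q q1 q' q1' = center_rhs 3 q q1 q' q1' + (b%:R - 3).
  by rewrite /center_rhs; ring.
rewrite coefE rhsE.
have : (3 : rat) <= b%:R by rewrite (ler_nat _ 3 b).
(* lra is slow when the context contains unfoldable definitions, hence the clear. *)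
move: D3 RD3; generalize (center_coef 3 q q1 q' q1') (center_rhs 3 q q1 q' q1').
clear; move=> c r D3 RD3 b3.
split; [lra | left; lra].
Qed.

Lemma hj_fracs_chain q q1 s : (q, q1) \in hj_fracs -> hj_chain s ->
  hjcf s = q%:R / q1%:R -> hjnum s = q%:R /\ (q = q1.+1 -> all (pred1 2%N) s).
Proof.
move=> fr s2 hs; have /allP /(_ _ fr) /and4P [e2 /eqP he /eqP Ne can] := hj_expand_fracs.
have -> : s = hj_expand q q1 by apply: hjcf_inj; rewrite // hs he.
by split=> // q_eq; move: can; rewrite q_eq eqxx.
Qed.

Theorem proposition4p8 (b q q1 q' q1' : nat) (ns ns' : seq nat) (a : nat -> rat) :
  (2 <= b)%N ->
  (q, q1, q', q1') \in quads ->
  ns != [::] -> all (fun n => 2 <= n)%N ns -> hjcf ns = q%:R / q1%:R ->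
  ns' != [::] -> all (fun n => 2 <= n)%N ns' -> hjcf ns' = q'%:R / q1'%:R ->
  is_discrepancy b ns ns' a ->
  (exists i : nat, (i <= cfg_l ns ns')%N /\ a i != 0) ->
  1 <= a 0%N + a 1%N.
Proof.
move=> b2 Hq ns_nz ns2 hj ns'_nz ns'2 hj' a_disc [i [il ai]].
have ns_gt0 : (0 < size ns)%N by rewrite lt0n size_eq0.
have ns'_gt0 : (0 < size ns')%N by rewrite lt0n size_eq0.
have /andP [fr fr'] := quads_fracs Hq.
have [N_q can] := hj_fracs_chain fr ns2 hj.
have [N_q' can'] := hj_fracs_chain fr' ns'2 hj'.
have a1E := discrepancy_branch ns_gt0 ns'_gt0 a_disc.
have := discrepancy_center_value ns_gt0 ns'_gt0 a_disc ns2 ns'2.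
rewrite hj hj' N_q N_q' -/(center_coef b%:R q q1 q' q1') -/(center_rhs b%:R q q1 q' q1').
have [D_gt0 [bound | [R0 q_eq q'_eq]]] := quads_center_bound b2 Hq.
  move: D_gt0 bound; generalize (center_coef b%:R q q1 q' q1') (center_rhs b%:R q q1 q' q1').
  move: a1E; clear => a1E D R D_gt0 bound a0E.
  have : 0 <= (3 * a 0%N - 2) * D by lra.
  rewrite pmulr_lge0 //; lra.
rewrite R0 => /eqP; rewrite mulf_eq0 (gt_eqF D_gt0) orbF => /eqP a0.
have a_eq0 := discrepancy_eq0 ns_gt0 ns'_gt0 a_disc (can q_eq) (can' q'_eq) a0.
by rewrite a_eq0 // eqxx in ai.
Qed.
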